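(* If $\Phi$ is of type $A_n$ or $C_n$, the set of standard parabolic facets of $\mathcal P_\Phi$ is the set of convex hulls $\operatorname{conv}(I)$ of the maximal abelian ideals $I$ of $\Phi^+$.
   Context: $\Phi$ is a finite irreducible crystallographic root system of rank $n$ with inner product $(-,-)$, basis $\Pi=\{\alpha_1,\dots,\alpha_n\}$ (Bourbaki numbering), positive roots $\Phi^+$, highest root $\theta=\sum_i m_i\alpha_i$; $\breve\omega_i$ is the fundamental coweight ($(\alpha_j,\breve\omega_i)=\delta_{ij}$). $\mathcal P_\Phi=\operatorname{conv}(\Phi)$. For $i\in[n]$, $F_i=\operatorname{conv}\{\beta\in\Phi^+\mid(\beta,\breve\omega_i)=m_i\}$ is a face of $\mathcal P_\Phi$; the standard parabolic facets are those $F_i$ that are facets (faces of dimension $n-1$) of $\mathcal P_\Phi$. The root poset is $\Phi^+$ with $\beta\ge\gamma$ iff $\beta-\gamma$ is a nonnegative integer combination of simple roots; an abelian ideal is a subset of $\Phi^+$ closed upward in the root poset with $(I+I)\cap\Phi=\emptyset$, and maximal means maximal under inclusion. *)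

From HB Require Import structures.
From mathcomp Require Import all_boot all_order all_algebra.
From mathcomp Require Import boolp classical_sets.

Set Implicit Arguments.
Unset Strict Implicit.
Unset Printing Implicit Defensive.

Import Order.TTheory GRing.Theory Num.Theory.
Local Open Scope ring_scope.
Local Open Scope classical_set_scope.

(* Roots are represented by their coordinate vectors in the basis of   *)
(* simple roots Pi = {alpha_1,...,alpha_n} (Bourbaki numbering; index  *)
(* k : 'I_n stands for alpha_(k+1)).  Thus for a root beta,            *)
(* (beta, breve-omega_i) = beta 0 i  (the coefficient of alpha_i).     *)

Inductive root_type := TypeA | TypeC.

Definition ind (b : bool) : int := if b then 1 else 0.

Definition posroot_A (n : nat) (beta : 'rV[int]_n) : Prop :=
  exists i j : 'I_n, (i <= j)%N /\
    beta = \row_k ind ((i <= k)%N && (k <= j)%N).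

(* Positive roots of C_n (Bourbaki: alpha_k = e_k - e_(k+1), k < n-1 (0-based),
   alpha_(n-1) = 2 e_(n-1)), written in simple-root coordinates:
   e_a - e_b (a < b)   = sum_(a <= k < b) alpha_k
   e_a + e_b (a < b)   = sum_(a <= k < b) alpha_k + 2 sum_(b <= k < n-1) alpha_k + alpha_(n-1)
   2 e_a               = 2 sum_(a <= k < n-1) alpha_k + alpha_(n-1).            *)
Definition posroot_C (n : nat) (beta : 'rV[int]_n) : Prop :=
  (exists a b : 'I_n, (a < b)%N /\
     beta = \row_k ind ((a <= k)%N && (k < b)%N))
  \/ (exists a b : 'I_n, (a < b)%N /\
     beta = \row_k (ind ((a <= k)%N && (k < b)%N)
                    + 2 * ind ((b <= k)%N && (k < n.-1)%N)
                    + ind (k == n.-1 :> nat)))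
  \/ (exists a : 'I_n,
     beta = \row_k (2 * ind ((a <= k)%N && (k < n.-1)%N)
                    + ind (k == n.-1 :> nat))).

Definition posroot (t : root_type) (n : nat) (beta : 'rV[int]_n) : Prop :=
  match t with TypeA => posroot_A beta | TypeC => posroot_C beta end.

Definition root (t : root_type) (n : nat) (beta : 'rV[int]_n) : Prop :=
  posroot t beta \/ posroot t (- beta).

(* Root poset: gamma <= beta iff beta - gamma is a nonnegative integer
   combination of simple roots, i.e. all its coordinates are >= 0. *)
Definition rp_le (n : nat) (gamma beta : 'rV[int]_n) : Prop :=
  forall k, gamma 0 k <= beta 0 k.

Definition highest_root (t : root_type) (n : nat) (theta : 'rV[int]_n) : Prop :=
  posroot t theta /\ forall gamma, posroot t gamma -> rp_le gamma theta.

Definition abelian_ideal (t : root_type) (n : nat) (I : set 'rV[int]_n) : Prop :=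
  [/\ (forall beta, I beta -> posroot t beta),
      (forall beta gamma, I beta -> posroot t gamma -> rp_le beta gamma -> I gamma)
    & (forall beta gamma, I beta -> I gamma -> ~ root t (beta + gamma))].

Definition maximal_abelian_ideal (t : root_type) (n : nat) (I : set 'rV[int]_n)
  : Prop :=
  abelian_ideal t I /\
  forall J, abelian_ideal t J -> I `<=` J -> J = I.

Definition emb (R : realFieldType) (n : nat) (beta : 'rV[int]_n) : 'rV[R]_n :=
  map_mx (fun z : int => z%:~R) beta.

Definition dotv (R : realFieldType) (n : nat) (c x : 'rV[R]_n) : R :=
  (c *m x^T) 0 0.

Definition conv (R : realFieldType) (n : nat) (S : set 'rV[R]_n) : set 'rV[R]_n :=
  [set x | exists (k : nat) (p : 'I_k -> 'rV[R]_n) (w : 'I_k -> R),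
      [/\ forall j, S (p j), forall j, 0 <= w j, \sum_(j < k) w j = 1
        & x = \sum_(j < k) w j *: p j]].

Definition is_face (R : realFieldType) (n : nat) (P F : set 'rV[R]_n) : Prop :=
  exists (c : 'rV[R]_n) (b : R),
    (forall x, P x -> dotv c x <= b) /\ F = [set x | P x /\ dotv c x = b].

Definition affdim_ge (R : realFieldType) (n : nat) (S : set 'rV[R]_n) (d : nat)
  : Prop :=
  exists p : 'I_d.+1 -> 'rV[R]_n,
    (forall j, S (p j)) /\
    \rank (\matrix_(j < d) (p (lift ord0 j) - p ord0)) = d.

Definition affdim_eq (R : realFieldType) (n : nat) (S : set 'rV[R]_n) (d : nat)
  : Prop :=
  affdim_ge S d /\ ~ affdim_ge S d.+1.

Definition is_facet (R : realFieldType) (n : nat) (P F : set 'rV[R]_n) : Prop :=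
  is_face P F /\ affdim_eq F n.-1.

Definition root_polytope (R : realFieldType) (t : root_type) (n : nat)
  : set 'rV[R]_n :=
  conv [set emb R beta | beta in [set beta | root t beta]].

(* F_i = conv{ beta in Phi^+ | (beta, breve-omega_i) = m_i }, theta = sum m_i alpha_i. *)
Definition Fi (R : realFieldType) (t : root_type) (n : nat) (theta : 'rV[int]_n)
  (i : 'I_n) : set 'rV[R]_n :=
  conv [set emb R beta | beta in [set beta | posroot t beta /\ beta 0 i = theta 0 i]].
Arguments Fi R t n theta i : clear implicits.
Arguments root_polytope R t n : clear implicits.

(* In types A_n and C_n the highest root is theta = (1,...,1), resp.
   (2,...,2,1), and bounds every positive root coordinatewise.  Hence
   x_i <= theta_i is a valid inequality of P_Phi, F_i is the face it cuts out,
   and F_i = conv(I_i) with I_i = {beta in Phi^+ | beta_i = theta_i}; two roots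
   of I_i add up to more than theta_i, so I_i is an abelian ideal.

   Type A: an abelian ideal cannot contain two disjoint intervals (enlarge one
   until they touch; then their sum is a root), so its members share a
   coordinate i and it lies in I_i.  Thus the maximal abelian ideals are the
   I_i, and every F_i is a facet.

   Type C: e_a - e_b and e_a + e_b add up to the root 2 e_a, so every member of
   an abelian ideal has last coordinate 1 and I_n is the unique maximal
   abelian ideal.  F_n is a facet, while for i < n all points of F_i share
   their coordinates i,...,n, so F_i has too small a dimension. *)
From Pilot Require Import Defs.
From HB Require Import structures.
From mathcomp Require Import all_boot all_order all_algebra.
From mathcomp Require Import boolp classical_sets.
From mathcomp Require Import zify lra.
Set Implicit Arguments.
Unset Strict Implicit.
Import Order.TTheory GRing.Theory Num.Theory.
Local Open Scope ring_scope.
Local Open Scope classical_set_scope.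

Section ConvexHull.
Variables (R : realFieldType) (n : nat).
Implicit Types (S : set 'rV[R]_n) (i : 'I_n).

Lemma conv_sub S x : S x -> conv S x.
Proof.
move=> Sx; exists 1%N, (fun=> x), (fun=> 1).
by split=> //; rewrite big_ord1 ?scale1r.
Qed.

Lemma conv_subset S T : S `<=` T -> conv S `<=` conv T.
Proof.
by move=> ST x [k [p [w [Sp w0 w1 ->]]]]; exists k, p, w; split=> // j; apply: ST.
Qed.

Lemma sum_scale_coord k (p : 'I_k -> 'rV[R]_n) (w : 'I_k -> R) i :
  (\sum_(j < k) w j *: p j) 0 i = \sum_(j < k) w j * p j 0 i.
Proof. by rewrite summxE; apply: eq_bigr => j _; rewrite mxE. Qed.

Lemma conv_coord_le S i b :
  (forall y, S y -> y 0 i <= b) -> forall x, conv S x -> x 0 i <= b.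
Proof.
move=> Sb x [k [p [w [Sp w0 w1 ->]]]]; rewrite sum_scale_coord.
apply: (@le_trans _ _ (\sum_(j < k) w j * b)).
  by apply: ler_sum => j _; apply: ler_wpM2l => //; apply: Sb.
by rewrite -big_distrl /= w1 mul1r.
Qed.

Lemma conv_coord_eq S i b :
  (forall y, S y -> y 0 i = b) -> forall x, conv S x -> x 0 i = b.
Proof.
move=> Sb x [k [p [w [Sp w0 w1 ->]]]]; rewrite sum_scale_coord.
rewrite (eq_bigr (fun j => w j * b)) => [|j _]; last by rewrite Sb.
by rewrite -big_distrl /= w1 mul1r.
Qed.

(* In a convex combination attaining the bound, every point of positive weight
   attains it; the points of weight 0 are replaced by the witness [y0]. *)
Lemma conv_coord_max S i b y0 :
  (forall y, S y -> y 0 i <= b) -> S y0 -> y0 0 i = b ->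
  forall x, conv S x -> x 0 i = b -> conv [set y | S y /\ y 0 i = b] x.
Proof.
move=> Sb Sy0 y0b x [k [p [w [Sp w0 w1 Ex]]]] xb.
have wp_eq0 j : w j * (b - p j 0 i) = 0.
  apply: (psumr_eq0P (P := xpredT) (F := fun j => w j * (b - p j 0 i))) => //.
    by move=> l _; rewrite mulr_ge0 // subr_ge0 Sb.
  under eq_bigr do rewrite mulrBr.
  by rewrite sumrB -big_distrl /= w1 mul1r -sum_scale_coord -Ex xb subrr.
pose q j := if p j 0 i == b then p j else y0.
exists k, q, w; split=> // [j|].
  by rewrite /q; case: eqP.
rewrite Ex; apply: eq_bigr => j _; rewrite /q; case: eqP => // /eqP pb.
move/eqP: (wp_eq0 j); rewrite mulf_eq0 subr_eq0 [b == _]eq_sym (negbTE pb) orbF.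
by move/eqP ->; rewrite !scale0r.
Qed.

Lemma dotv_delta i (x : 'rV[R]_n) : dotv (delta_mx 0 i) x = x 0 i.
Proof. by rewrite /dotv -rowE !mxE. Qed.

Lemma is_face_conv_coord S i b y0 :
  (forall y, S y -> y 0 i <= b) -> S y0 -> y0 0 i = b ->
  is_face (conv S) (conv [set y | S y /\ y 0 i = b]).
Proof.
move=> Sb Sy0 y0b; exists (delta_mx 0 i), b; split=> [x Sx|].
  by rewrite dotv_delta; apply: conv_coord_le Sx.
apply/seteqP; split=> x /=; rewrite dotv_delta.
  move=> Fx; split; first by apply: conv_subset Fx => y [].
  by apply: conv_coord_eq Fx => y [].
by case=> Sx xb; apply: (conv_coord_max Sb Sy0 y0b Sx xb).
Qed.

End ConvexHull.

Section Rank.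
Variable R : realFieldType.

Lemma rank_le_zero_cols d n (M : 'M[R]_(d, n)) (c : nat) : (c <= n)%N ->
  (forall j (k : 'I_n), (c <= k)%N -> M j k = 0) -> (\rank M <= c)%N.
Proof.
move=> cn M0.
have -> : M = M *m pid_mx c.
  apply/matrixP => j k; rewrite !mxE (bigD1 k) //= big1 => [|l /negbTE lk].
    rewrite !mxE eqxx /=; case: (ltnP k c) => kc; first by rewrite mulr1 addr0.
    by rewrite M0 // mul0r addr0.
  by rewrite !mxE; case: eqP => [/val_inj/eqP|]; rewrite ?lk //= mulr0.
by apply: leq_trans (mxrankM_maxr _ _) _; rewrite rank_pid_mx.
Qed.

Lemma rank_lt_zero_col d n (M : 'M[R]_(d, n)) (i : 'I_n) :
  (forall j, M j i = 0) -> (\rank M < n)%N.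
Proof.
move=> M0.
have : ((delta_mx 0 i : 'rV[R]_n) <= kermx M^T)%MS.
  by apply/sub_kermxP; rewrite -rowE; apply/rowP => j; rewrite !mxE M0.
by move/mxrankS; rewrite mxrank_delta mxrank_ker mxrank_tr; lia.
Qed.

Lemma rank_trig_delcol m (M : 'M[R]_(m, m.+1)) (i : 'I_m.+1) :
  (forall j l : 'I_m, (j < l)%N -> M j (lift i l) = 0) ->
  (forall j, M j (lift i j) != 0) -> \rank M = m.
Proof.
move=> M_trig M_diag.
pose D : 'M[R]_(m.+1, m) := \matrix_(k, l) (k == lift i l)%:R.
have MD : M *m D = \matrix_(j, l) M j (lift i l).
  apply/matrixP => j l; rewrite !mxE (bigD1 (lift i l)) //= big1 => [|k /negbTE kl].
    by rewrite !mxE eqxx mulr1 addr0.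
  by rewrite !mxE kl mulr0.
have rkMD : \rank (M *m D) = m.
  rewrite MD; apply: mxrank_unit; rewrite unitmxE unitfE det_trig.
    by apply/prodf_neq0 => j _; rewrite mxE.
  by apply/is_trig_mxP => j l jl; rewrite mxE M_trig.
by apply/eqP; rewrite eqn_leq rank_leq_row -{1}rkMD mxrankM_maxl.
Qed.

Lemma affdim_ge_coords_fixed n (F : set 'rV[R]_n) (i : 'I_n) (c : 'rV[R]_n) d :
  (forall y, F y -> forall k : 'I_n, (i <= k)%N -> y 0 k = c 0 k) ->
  affdim_ge F d -> (d <= i)%N.
Proof.
move=> Fc [p [Fp <-]]; apply: rank_le_zero_cols; first exact: ltnW.
by move=> j k ik; rewrite !mxE !(Fc _ (Fp _)) // subrr.
Qed.

Lemma not_affdim_ge_coord_fixed n (F : set 'rV[R]_n) (i : 'I_n) b :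
  (forall y, F y -> y 0 i = b) -> ~ affdim_ge F n.
Proof.
move=> Fb [p [Fp rkp]]; move: (ltnn n); rewrite -{1}rkp.
by rewrite (@rank_lt_zero_col _ _ _ i) // => j; rewrite !mxE !Fb // subrr.
Qed.

End Rank.

Ltac ind_lia := rewrite /ind; repeat (case: ifP => ?); lia.

(* [rootA n a b] is alpha_a + ... + alpha_b; in type C, [rootC_short],
   [rootC_long] and [rootC_double] are e_a - e_b, e_a + e_b and 2 e_a. *)
Definition rootA n (a b : nat) : 'rV[int]_n := \row_k ind ((a <= k) && (k <= b))%N.
Definition rootC_short n (a b : nat) : 'rV[int]_n := \row_k ind ((a <= k) && (k < b))%N.
Definition rootC_long n (a b : nat) : 'rV[int]_n :=
  \row_k (ind ((a <= k)%N && (k < b)%N) + 2 * ind ((b <= k)%N && (k < n.-1)%N)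
          + ind (k == n.-1 :> nat)).
Definition rootC_double n (a : nat) : 'rV[int]_n :=
  \row_k (2 * ind ((a <= k)%N && (k < n.-1)%N) + ind (k == n.-1 :> nat)).

Definition theta_of t n : 'rV[int]_n :=
  match t with TypeA => rootA n 0 n.-1 | TypeC => rootC_double n 0 end.

Lemma posroot_AE n (beta : 'rV[int]_n) : posroot TypeA beta <->
  exists a b : nat, [/\ (a <= b)%N, (b < n)%N & beta = rootA n a b].
Proof.
split=> [[i [j [ij ->]]]|[a [b [ab bn ->]]]]; first by exists i, j.
by exists (Ordinal (leq_ltn_trans ab bn)), (Ordinal bn).
Qed.

Lemma posroot_CE n (beta : 'rV[int]_n) : posroot TypeC beta <->
  [\/ exists a b : nat, [/\ (a < b)%N, (b < n)%N & beta = rootC_short n a b],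
      exists a b : nat, [/\ (a < b)%N, (b < n)%N & beta = rootC_long n a b]
    | exists a : nat, (a < n)%N /\ beta = rootC_double n a].
Proof.
split.
  case=> [[i [j [ij ->]]]|[[i [j [ij ->]]]|[i ->]]].
  - by apply: Or31; exists i, j.
  - by apply: Or32; exists i, j.
  - by apply: Or33; exists i.
case=> [[a [b [ab bn ->]]]|[a [b [ab bn ->]]]|[a [an ->]]].
- by left; exists (Ordinal (ltn_trans ab bn)), (Ordinal bn).
- by right; left; exists (Ordinal (ltn_trans ab bn)), (Ordinal bn).
- by right; right; exists (Ordinal an).
Qed.

Lemma rootA_pos n a b : (a <= b)%N -> (b < n)%N -> posroot TypeA (rootA n a b).
Proof. by move=> ab bn; apply/posroot_AE; exists a, b. Qed.

Lemma rootC_long_pos n a b : (a < b)%N -> (b < n)%N -> posroot TypeC (rootC_long n a b).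
Proof. by move=> ab bn; apply/posroot_CE; apply: Or32; exists a, b. Qed.

Lemma rootC_double_pos n a : (a < n)%N -> posroot TypeC (rootC_double n a).
Proof. by move=> an; apply/posroot_CE; apply: Or33; exists a. Qed.

Lemma posroot_bounded t n (beta : 'rV[int]_n) :
  posroot t beta -> forall k, 0 <= beta 0 k <= theta_of t n 0 k.
Proof.
case: t => /=.
  by case/posroot_AE=> [a [b [ab bn ->]]] k; rewrite !mxE; have := ltn_ord k; ind_lia.
case/posroot_CE=> [[a [b [ab bn ->]]]|[a [b [ab bn ->]]]|[a [an ->]]] k;
  rewrite !mxE; have := ltn_ord k; ind_lia.
Qed.

Lemma theta_of_pos t n : (0 < n)%N -> posroot t (theta_of t n).
Proof. by case: t => n0; [apply: rootA_pos; lia | apply: rootC_double_pos]. Qed.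

Lemma theta_of_gt0 t n (k : 'I_n) : 0 < theta_of t n 0 k.
Proof. by have := ltn_ord k; case: t; rewrite /= !mxE; ind_lia. Qed.

Lemma highest_rootE t n theta :
  (0 < n)%N -> highest_root t theta -> theta = theta_of t n.
Proof.
move=> n0 [Ptheta theta_max]; apply/rowP => k; apply/eqP; rewrite eq_le.
have /andP[_ ->] := posroot_bounded Ptheta k.
by rewrite (theta_max _ (theta_of_pos t n0)).
Qed.

Lemma root_bounded t n (beta : 'rV[int]_n) k :
  Defs.root t beta -> beta 0 k <= theta_of t n 0 k.
Proof.
case=> [/posroot_bounded/(_ k)/andP[] //|/posroot_bounded/(_ k)/andP[]].
rewrite mxE oppr_ge0 => beta_le0 _.
exact: le_trans beta_le0 (ltW (theta_of_gt0 _ _)).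
Qed.

Lemma theta_A_coord n (k : 'I_n) : theta_of TypeA n 0 k = 1.
Proof. by rewrite /= mxE; have := ltn_ord k; ind_lia. Qed.

Definition top_ideal t n (i : 'I_n) : set 'rV[int]_n :=
  [set beta | posroot t beta /\ beta 0 i = theta_of t n 0 i].

Lemma top_ideal_abelian t n (i : 'I_n) : abelian_ideal t (top_ideal t i).
Proof.
split=> [beta [] // | beta gamma [_ beta_i] Pgamma le_beta_gamma | beta gamma].
  split=> //; apply/eqP; rewrite eq_le.
  by have /andP[_ ->] := posroot_bounded Pgamma i; rewrite -beta_i le_beta_gamma.
move=> [_ beta_i] [_ gamma_i] /(root_bounded i); rewrite mxE beta_i gamma_i.
by have := theta_of_gt0 t i; lra.
Qed.

Lemma abelian_ideal_sub_top t n (I : set 'rV[int]_n) i :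
  abelian_ideal t I -> (forall beta, I beta -> beta 0 i = theta_of t n 0 i) ->
  I `<=` top_ideal t i.
Proof. by case=> Ipos _ _ Itop beta Ibeta; split; [apply: Ipos | apply: Itop]. Qed.

Lemma maximal_top_ideal t n (i : 'I_n) :
  (forall J, abelian_ideal t J -> top_ideal t i `<=` J ->
     forall beta, J beta -> beta 0 i = theta_of t n 0 i) ->
  maximal_abelian_ideal t (top_ideal t i).
Proof.
move=> top_of_J; split=> [|J Jab sub_iJ]; first exact: top_ideal_abelian.
by apply/seteqP; split=> //; apply: abelian_ideal_sub_top (top_of_J J Jab sub_iJ).
Qed.

Lemma maximal_abelian_idealE t n (I : set 'rV[int]_n) i :
  maximal_abelian_ideal t I -> (forall beta, I beta -> beta 0 i = theta_of t n 0 i) ->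
  I = top_ideal t i.
Proof.
case=> Iab Imax Itop; apply/esym/Imax; first exact: top_ideal_abelian.
exact: abelian_ideal_sub_top.
Qed.

Lemma rootA_add n a b c d : c = b.+1 -> (a <= c)%N -> (b <= d)%N ->
  rootA n a b + rootA n c d = rootA n a d.
Proof. by move=> *; subst; apply/rowP => k; rewrite !mxE; ind_lia. Qed.

Lemma rootA_le n a b a' b' : (a' <= a)%N -> (b <= b')%N ->
  rp_le (rootA n a b) (rootA n a' b').
Proof. by move=> a'a bb' k; rewrite !mxE; ind_lia. Qed.

(* Enlarging the left interval until it touches the right one stays inside the
   ideal, and two adjacent intervals add up to a root. *)
Lemma interval_abelian_disjoint n (J : set 'rV[int]_n) a b c d :
  abelian_ideal TypeA J -> (a <= b)%N -> (b < c)%N -> (c <= d)%N -> (d < n)%N ->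
  J (rootA n a b) -> J (rootA n c d) -> False.
Proof.
case=> _ Jup Jab ab bc cd dn Jl Jr.
have Jl' : J (rootA n a c.-1).
  by apply: (Jup _ _ Jl); [apply: rootA_pos | apply: rootA_le]; lia.
have := Jab _ _ Jl' Jr; rewrite rootA_add; try lia.
by apply; left; apply: rootA_pos; lia.
Qed.

Lemma abelian_ideal_A_simple n (J : set 'rV[int]_n) (i : 'I_n) :
  abelian_ideal TypeA J -> J (rootA n i i) -> forall beta, J beta -> beta 0 i = 1.
Proof.
move=> Jab Ji beta Jbeta; have [Jpos _ _] := Jab.
have /posroot_AE[a [b [ab bn Ebeta]]] := Jpos _ Jbeta; rewrite Ebeta in Jbeta *.
have := ltn_ord i; case: (ltnP b i) => [bi|ib] ilt.
  by case: (interval_abelian_disjoint Jab ab bi (leqnn _) ilt Jbeta Ji).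
case: (ltnP i a) => [ia|ai]; last by rewrite mxE; ind_lia.
by case: (interval_abelian_disjoint Jab (leqnn _) ia ab bn Ji Jbeta).
Qed.

Lemma abelian_ideal_A_common n (I : set 'rV[int]_n) : (0 < n)%N ->
  abelian_ideal TypeA I -> exists i : 'I_n, forall beta, I beta -> beta 0 i = 1.
Proof.
move=> n0 Iab; have [Ipos _ _] := Iab.
have [[beta0 Ibeta0]|I0] := pselect (exists beta, I beta); last first.
  by exists (Ordinal n0) => beta Ibeta; case: I0; exists beta.
(* [i] is the least right end of an interval in [I]. *)
pose P k := `[< exists a, [/\ I (rootA n a k), (a <= k)%N & (k < n)%N] >].
have exP : exists k, P k.
  have /posroot_AE[a [b [ab bn Eb]]] := Ipos _ Ibeta0.
  by exists b; apply/asboolP; exists a; rewrite -Eb.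
case: (ex_minnP exP) => i /asboolP [a0 [Ia0 a0i iln]] i_min.
exists (Ordinal iln) => beta Ibeta /=.
have /posroot_AE[a [b [ab bn Eb]]] := Ipos _ Ibeta; rewrite Eb in Ibeta *.
have ib : (i <= b)%N by apply: i_min; apply/asboolP; exists a.
case: (ltnP i a) => [ia|ai]; last by rewrite mxE /= ai ib.
by case: (interval_abelian_disjoint Iab a0i ia ab bn Ia0 Ibeta).
Qed.

Lemma maximal_top_ideal_A n (i : 'I_n) : maximal_abelian_ideal TypeA (top_ideal TypeA i).
Proof.
apply: maximal_top_ideal => J Jab sub_iJ beta Jbeta.
rewrite theta_A_coord; apply: abelian_ideal_A_simple Jab _ _ Jbeta.
by apply: sub_iJ; split; [apply: rootA_pos | rewrite theta_A_coord mxE; ind_lia].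
Qed.

Lemma maximal_abelian_ideal_A n (I : set 'rV[int]_n) : (0 < n)%N ->
  maximal_abelian_ideal TypeA I -> exists i : 'I_n, I = top_ideal TypeA i.
Proof.
move=> n0 Imax; have [i Ii] := abelian_ideal_A_common n0 Imax.1.
by exists i; apply: maximal_abelian_idealE => // beta Ibeta; rewrite theta_A_coord Ii.
Qed.

Lemma rootC_short_le_long n a b : rp_le (rootC_short n a b) (rootC_long n a b).
Proof. by move=> k; rewrite !mxE; ind_lia. Qed.

Lemma rootC_short_add_long n a b : (a < b)%N -> (b < n)%N ->
  rootC_short n a b + rootC_long n a b = rootC_double n a.
Proof. by move=> *; apply/rowP => k; rewrite !mxE; have := ltn_ord k; ind_lia. Qed.

Lemma abelian_ideal_C_last n (J : set 'rV[int]_n) (k : 'I_n) :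
  k = n.-1 :> nat -> abelian_ideal TypeC J ->
  forall beta, J beta -> beta 0 k = theta_of TypeC n 0 k.
Proof.
move=> kn [Jpos Jup Jab] beta Jbeta.
have /posroot_CE[[a [b [ab bn Eb]]]|[a [b [ab bn Eb]]]|[a [an Eb]]] :=
  Jpos _ Jbeta; rewrite Eb in Jbeta *; last 2 first; try by rewrite /= !mxE; ind_lia.
have Jlong : J (rootC_long n a b).
  by apply: (Jup _ _ Jbeta); [apply: rootC_long_pos | apply: rootC_short_le_long].
have := Jab _ _ Jbeta Jlong; rewrite rootC_short_add_long //.
by case; left; apply: rootC_double_pos; lia.
Qed.

Lemma maximal_top_ideal_C m : maximal_abelian_ideal TypeC (top_ideal TypeC (@ord_max m)).
Proof. by apply: maximal_top_ideal => J Jab _; apply: abelian_ideal_C_last. Qed.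

Lemma maximal_abelian_ideal_C m (I : set 'rV[int]_m.+1) :
  maximal_abelian_ideal TypeC I -> I = top_ideal TypeC ord_max.
Proof. by move=> Imax; apply: maximal_abelian_idealE (abelian_ideal_C_last _ Imax.1). Qed.

(* For i < n, the roots attaining theta_i are the e_a + e_b and 2 e_a with
   a, b <= i, which agree with theta from coordinate i on. *)
Lemma posroot_C_top_tail n (beta : 'rV[int]_n) (i : 'I_n) : posroot TypeC beta ->
  beta 0 i = theta_of TypeC n 0 i -> (i < n.-1)%N ->
  forall k : 'I_n, (i <= k)%N -> beta 0 k = theta_of TypeC n 0 k.
Proof.
case/posroot_CE=> [[a [b [ab bn ->]]]|[a [b [ab bn ->]]]|[a [an ->]]];
  rewrite /= !mxE => E il k ik; move: E; rewrite !mxE; have := ltn_ord k; ind_lia.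
Qed.

Section Facets.
Variable R : realFieldType.

Lemma emb_coord n (beta : 'rV[int]_n) i : emb R beta 0 i = (beta 0 i)%:~R.
Proof. by rewrite mxE. Qed.

Lemma Fi_coord t n (i : 'I_n) x :
  Fi R t n (theta_of t n) i x -> x 0 i = (theta_of t n 0 i)%:~R.
Proof. by apply: conv_coord_eq => _ [beta [_ Ebeta] <-]; rewrite emb_coord Ebeta. Qed.

Lemma is_face_Fi t n (i : 'I_n) : (0 < n)%N ->
  is_face (root_polytope R t n) (Fi R t n (theta_of t n) i).
Proof.
move=> n0.
pose S : set 'rV[R]_n := [set emb R beta | beta in [set beta | Defs.root t beta]].
have -> : Fi R t n (theta_of t n) i =
    conv [set y | S y /\ y 0 i = (theta_of t n 0 i)%:~R].
  congr conv; apply/seteqP; split=> y.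
    case=> beta [Pbeta Ebeta] <-.
    by split; [exists beta; first left | rewrite emb_coord Ebeta].
  case=> -[beta [Pbeta|Nbeta] <-];
    rewrite emb_coord => /eqP; rewrite eqr_int => /eqP Ebeta.
    by exists beta.
  have /andP[] := posroot_bounded Nbeta i.
  by rewrite mxE Ebeta oppr_ge0 leNgt theta_of_gt0.
apply: (@is_face_conv_coord _ _ S _ _ (emb R (theta_of t n))).
- by move=> _ [beta Rbeta <-]; rewrite emb_coord ler_int root_bounded.
- by exists (theta_of t n) => //; left; apply: theta_of_pos.
- exact: emb_coord.
Qed.

Lemma is_facet_FiP t n (i : 'I_n) : (0 < n)%N ->
  is_facet (root_polytope R t n) (Fi R t n (theta_of t n) i) <->
  affdim_ge (Fi R t n (theta_of t n) i) n.-1.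
Proof.
move=> n0; split=> [[_ []] // | dim]; split; first exact: is_face_Fi.
split=> //; rewrite prednK //; exact: not_affdim_ge_coord_fixed (@Fi_coord t n i).
Qed.

(* The roots alpha_j + ... + alpha_i (j <= i) and alpha_0 + ... + alpha_j
   (j > i): their differences to the first one are triangular off column i. *)
Lemma affdim_Fi_A m (i : 'I_m.+1) : affdim_ge (Fi R TypeA m.+1 (theta_of TypeA m.+1) i) m.
Proof.
pose pt (j : 'I_m.+1) : 'rV[int]_m.+1 :=
  \row_k (if (j <= i)%N then ind ((j <= k) && (k <= i))%N else ind (k <= j)%N).
have pt_rootA j : pt j = if (j <= i)%N then rootA m.+1 j i else rootA m.+1 0 j.
  by apply/rowP => k; case: leqP => ji; rewrite !mxE ?ji // leqNgt ji.
exists (fun j => emb R (pt j)); split.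
  move=> j; apply: conv_sub; exists (pt j) => //; split.
    by rewrite pt_rootA; case: leqP => ji; apply: rootA_pos => //; apply: ltnW.
  by rewrite theta_A_coord mxE; have := ltn_ord j; ind_lia.
apply: (@rank_trig_delcol _ _ _ i) => [j l jl|j];
  rewrite !mxE -intrB ?intr_eq0 ?(rwP eqP) ?intr_eq0 lift0 /= /bump;
  have := ltn_ord i; case: (ltnP j i) => ji.
- by have := ltn_ord l; case: (leqP i l) => /= il; ind_lia.
- by have := ltn_ord l; case: (leqP i l) => /= il; ind_lia.
- by have := ltn_ord j; case: (leqP i j) => /= ij; ind_lia.
- by have := ltn_ord j; case: (leqP i j) => /= ij; ind_lia.
Qed.

Lemma affdim_Fi_C_last m :
  affdim_ge (Fi R TypeC m.+1 (theta_of TypeC m.+1) ord_max) m.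
Proof.
exists (fun j : 'I_m.+1 => emb R (rootC_double m.+1 j)); split.
  move=> j; apply: conv_sub; exists (rootC_double m.+1 j) => //; split.
    exact: rootC_double_pos.
  by rewrite /= !mxE /=; have := ltn_ord j; ind_lia.
apply: (@rank_trig_delcol _ _ _ ord_max) => [j l jl|j];
  rewrite !mxE -intrB ?intr_eq0 ?(rwP eqP) ?intr_eq0 lift0 /= /bump
          [(m <= _)%N]leqNgt ltn_ord /=.
  by have := ltn_ord l; ind_lia.
by have := ltn_ord j; ind_lia.
Qed.

Lemma not_affdim_Fi_C m (i : 'I_m.+1) : (i < m)%N ->
  ~ affdim_ge (Fi R TypeC m.+1 (theta_of TypeC m.+1) i) m.
Proof.
move=> im dim; suff : (m <= i)%N by lia.
apply: (affdim_ge_coords_fixed (c := emb R (theta_of TypeC m.+1))) dim.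
move=> y Fy k ik; rewrite emb_coord; apply: conv_coord_eq Fy => _ [beta [Pbeta Ebeta] <-].
by rewrite emb_coord (posroot_C_top_tail Pbeta Ebeta).
Qed.

Lemma is_facet_Fi_C m (i : 'I_m.+1) :
  is_facet (root_polytope R TypeC m.+1) (Fi R TypeC m.+1 (theta_of TypeC m.+1) i) <->
  i = ord_max.
Proof.
rewrite is_facet_FiP //=; split=> [dim|->]; last exact: affdim_Fi_C_last.
apply/val_inj/eqP; rewrite /= eqn_leq -ltnS ltn_ord leqNgt; apply/negP.
by move/not_affdim_Fi_C; apply.
Qed.

End Facets.

Theorem theorem5p7 (R : realFieldType) (t : root_type) (n : nat)
  (theta : 'rV[int]_n) :
  (0 < n)%N -> highest_root t theta ->
  forall F : set 'rV[R]_n,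
    (exists i : 'I_n, F = Fi R t n theta i /\ is_facet (root_polytope R t n) F)
    <->
    (exists I : set 'rV[int]_n,
       maximal_abelian_ideal t I /\ F = conv [set emb R beta | beta in I]).
Proof.
move=> n0 /(highest_rootE n0) -> {theta}; case: n n0 => [//|m] n0 F.
split=> [[i [-> facet]] | [I [Imax ->]]].
  exists (top_ideal t i); split=> //; case: t facet => facet.
    exact: maximal_top_ideal_A.
  by move/is_facet_Fi_C: facet => ->; apply: maximal_top_ideal_C.
case: t Imax => Imax.
  have [i ->] := maximal_abelian_ideal_A n0 Imax.
  by exists i; split=> //; apply/is_facet_FiP => //; apply: affdim_Fi_A.
rewrite (maximal_abelian_ideal_C Imax); exists ord_max; split=> //.
exact/is_facet_Fi_C.
Qed.
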